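(* Let $A$ be a finite alphabet. Every regular function $f : A^* \to \mathbb{N}$ is $k$-repetitive for all integers $k \ge 1$.
   Context: A bimachine is a tuple $(A, M, \mu, \lambda)$ where $A$ is a finite alphabet, $M$ a finite monoid, $\mu : A^* \to M$ a monoid morphism and $\lambda : M \times A \times M \to \mathbb{N}$; it computes $f(w) = \sum_{i=1}^{|w|} \lambda(\mu(w[1{:}i-1]), w[i], \mu(w[i+1{:}|w|]))$. A function $A^* \to \mathbb{N}$ is regular if it is computed by a bimachine. For $k \ge 1$, a function $f : A^* \to \mathbb{N}$ is $k$-repetitive if there exists an integer $\omega_0 \ge 1$ such that for all words $\alpha, \beta, \alpha_0, u_1, \alpha_1, \dots, u_k, \alpha_k \in A^*$ and every positive multiple $\omega$ of $\omega_0$, setting $W(Z_1,\dots,Z_k) = \alpha_0 \prod_{i=1}^k u_i^{\omega Z_i} \alpha_i$ and $w = W(1,\dots,1)$, there exists a function $F : \mathbb{N}^k \to \mathbb{N}$ such that for all integers $X_1,\dots,X_k,Y_1,\dots,Y_k \ge 3$, $f(\alpha\, w^{2\omega-1} W(X_1,\dots,X_k)\, w^{\omega-1}\, W(Y_1,\dots,Y_k)\, w^{\omega}\, \beta) = F(X_1+Y_1, \dots, X_k+Y_k)$. *)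

From mathcomp Require Import all_boot.
Set Implicit Arguments. Unset Strict Implicit. Unset Printing Implicit Defensive.

Definition is_monoid (M : finType) (mul : M -> M -> M) (one : M) : Prop :=
  associative mul /\ left_id one mul /\ right_id one mul.

Definition is_monoid_morphism (A : finType) (M : finType) (mul : M -> M -> M)
  (one : M) (mu : seq A -> M) : Prop :=
  mu [::] = one /\ forall u v, mu (u ++ v) = mul (mu u) (mu v).

Fixpoint bm_aux (A : finType) (M : Type) (mu : seq A -> M)
  (lambda : M -> A -> M -> nat) (u w : seq A) : nat :=
  match w with
  | [::] => 0
  | a :: w' => lambda (mu u) a (mu w') + bm_aux mu lambda (rcons u a) w'
  end.

(* Function computed by the bimachine (A, M, mu, lambda):
   f(w) = sum_{i=1}^{|w|} lambda(mu(w[1:i-1]), w[i], mu(w[i+1:|w|])). *)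
Definition bimachine_fun (A : finType) (M : Type) (mu : seq A -> M)
  (lambda : M -> A -> M -> nat) (w : seq A) : nat :=
  bm_aux mu lambda [::] w.

Definition regular (A : finType) (f : seq A -> nat) : Prop :=
  exists (M : finType) (mul : M -> M -> M) (one : M) (mu : seq A -> M)
         (lambda : M -> A -> M -> nat),
    is_monoid mul one /\ is_monoid_morphism mul one mu /\
    forall w, f w = bimachine_fun mu lambda w.

Definition wpow (A : Type) (u : seq A) (n : nat) : seq A := flatten (nseq n u).

(* W(Z_1..Z_k) = alpha_0 u_1^{omega Z_1} alpha_1 ... u_k^{omega Z_k} alpha_k,
   with alpha indexed by 'I_k.+1 (alpha_0 = alpha ord0, alpha_i = alpha (lift ord0 (i-1)))
   and u indexed by 'I_k. *)
Definition Wword (A : Type) (k omega : nat) (alpha : 'I_k.+1 -> seq A)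
  (u : 'I_k -> seq A) (Z : 'I_k -> nat) : seq A :=
  alpha ord0 ++ flatten [seq wpow (u i) (omega * Z i) ++ alpha (lift ord0 i)
                        | i <- enum 'I_k].

Definition repetitive (A : finType) (k : nat) (f : seq A -> nat) : Prop :=
  exists omega0 : nat, 1 <= omega0 /\
  forall (a b : seq A) (alpha : 'I_k.+1 -> seq A) (u : 'I_k -> seq A) (omega : nat),
    0 < omega -> omega0 %| omega ->
    let w := Wword omega alpha u (fun _ => 1) in
    exists F : {ffun 'I_k -> nat} -> nat,
      forall X Y : {ffun 'I_k -> nat},
        (forall i, 3 <= X i) -> (forall i, 3 <= Y i) ->
        f (a ++ wpow w (2 * omega - 1) ++ Wword omega alpha u X
             ++ wpow w (omega - 1) ++ Wword omega alpha u Y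
             ++ wpow w omega ++ b)
        = F [ffun i => X i + Y i].

From mathcomp Require Import all_boot zify.
Set Implicit Arguments. Unset Strict Implicit. Unset Printing Implicit Defensive.

(* The bimachine value of a word is a sum of contributions of its factors, each of which
   depends only on the factor and on the monoid values [l], [r] of its left and right
   contexts.  For [om] a multiple of [|M|!] every [mu(v)^om] is idempotent, so the
   contribution of [u^(om n)] is affine in [n] for [n >= 2], and hence the contribution of
   [W(Z)] is affine in [Z].  Idempotence also gives [W(X)] and [W(Y)] the same contexts in
   the pumped word, namely [mu(a) mu(w)^(2om-1)] on the left and [mu(w)^om mu(b)] on the
   right.  So [f] is a constant plus [g(X) + g(Y)] with [g] affine, a function of [X + Y]. *)

Definition mpow (M : Type) (mul : M -> M -> M) (one : M) (x : M) (n : nat) : M :=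
  iter n (mul x) one.

Section Powers.
Variables (M : Type) (mul : M -> M -> M) (one : M).
Hypotheses (mulA : associative mul) (mul1m : left_id one mul).
Local Notation "x ^+ n" := (mpow mul one x n).

Lemma mpowD x m n : x ^+ (m + n) = mul (x ^+ m) (x ^+ n).
Proof. by elim: m => [|m IHm] /=; rewrite ?mul1m // /mpow /= -/(x ^+ _) IHm mulA. Qed.

Lemma mpow_periodic x i p n c :
  x ^+ (i + p) = x ^+ i -> i <= n -> x ^+ (n + c * p) = x ^+ n.
Proof.
move=> per /subnK <-; elim: c => [|c IHc]; first by rewrite addn0.
have -> : n - i + i + c.+1 * p = i + p + (n - i + c * p) by rewrite mulSn; lia.
by rewrite mpowD per -mpowD addnA [i + _]addnC.
Qed.

Lemma mpow_idem_of_period x i p om :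
  x ^+ (i + p) = x ^+ i -> i <= om -> p %| om -> mul (x ^+ om) (x ^+ om) = x ^+ om.
Proof.
move=> per le_iom /dvdnP[c om_eq]; rewrite om_eq in le_iom *.
by rewrite -mpowD (mpow_periodic _ per).
Qed.

End Powers.

(* Pigeonhole on [x^0, ..., x^|M|] gives a period p <= |M|, hence p divides |M|!. *)
Lemma mpow_fact_idem (M : finType) (mul : M -> M -> M) (one : M) x om :
  associative mul -> left_id one mul -> 0 < om -> #|M|`! %| om ->
  mul (mpow mul one x om) (mpow mul one x om) = mpow mul one x om.
Proof.
move=> mulA mul1m om_gt0 fact_dvd_om.
pose f (i : 'I_#|M|.+1) := mpow mul one x i.
have [i [j neq_ij eq_fij]] : exists i, exists2 j, i != j & f i = f j.
  by apply/injectivePn/negP => /injectiveP/leq_card; rewrite card_ord ltnn.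
wlog lt_ij : i j neq_ij eq_fij / i < j.
  move=> IH; case: (ltngtP i j) => [lt_ij|lt_ji|/val_inj eq_ij].
  - exact: (IH i j).
  - by apply: (IH j i); rewrite 1?eq_sym.
  - by rewrite eq_ij eqxx in neq_ij.
have le_jM : j <= #|M| by rewrite -ltnS.
have dvd_M t : 0 < t <= #|M| -> t %| om.
  by move=> t_range; exact: dvdn_trans (dvdn_fact t_range) fact_dvd_om.
apply: (@mpow_idem_of_period _ _ _ mulA mul1m x i (j - i)).
- by rewrite subnKC ?(ltnW lt_ij).
- by apply: leq_trans (ltnW lt_ij) (dvdn_leq om_gt0 (dvd_M j _)); lia.
- by apply: dvd_M; lia.
Qed.

Lemma wpowD (A : Type) (u : seq A) m n : wpow u (m + n) = wpow u m ++ wpow u n.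
Proof. by rewrite /wpow nseqD flatten_cat. Qed.

Definition sum_dependent (I : Type) (g : (I -> nat) -> nat) : Prop :=
  forall X Y X' Y' : I -> nat,
    (forall i, [/\ 2 <= X i, 2 <= Y i, 2 <= X' i & 2 <= Y' i]) ->
    (forall i, X i + Y i = X' i + Y' i) -> g X + g Y = g X' + g Y'.

Definition affine_from2 (h : nat -> nat) : Prop :=
  exists c d, forall n, h n.+2 = c + n * d.

Section SumDependent.
Variable I : Type.
Implicit Types g h : (I -> nat) -> nat.

Lemma sum_dependent_ext g h :
  (forall Z, (forall i, 2 <= Z i) -> g Z = h Z) -> sum_dependent h -> sum_dependent g.
Proof.
move=> eq_gh dep_h X Y X' Y' ge2 eqXY.
by rewrite !eq_gh ?(dep_h _ _ _ _ ge2 eqXY) // => i; case: (ge2 i).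
Qed.

Lemma sum_dependent_cst c : sum_dependent (fun _ : I -> nat => c).
Proof. by []. Qed.

Lemma sum_dependentD g h :
  sum_dependent g -> sum_dependent h -> sum_dependent (fun Z => g Z + h Z).
Proof.
move=> dep_g dep_h X Y X' Y' ge2 eqXY.
by have := dep_g _ _ _ _ ge2 eqXY; have := dep_h _ _ _ _ ge2 eqXY; lia.
Qed.

Lemma sum_dependent_affine (i : I) (h : nat -> nat) :
  affine_from2 h -> sum_dependent (fun Z => h (Z i)).
Proof.
move=> [c [d hE]] X Y X' Y' /(_ i)[] + + + + /(_ i).
move: (X i) (Y i) (X' i) (Y' i) => [|[|x]] // [|[|y]] // [|[|x']] // [|[|y']] // _ _ _ _.
move=> eq_sum; have {}eq_sum : x + y = x' + y' by lia.
by rewrite !hE addnACA -mulnDl eq_sum mulnDl addnACA.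
Qed.

End SumDependent.

Section Bimachine.
Variables (A : finType) (M : Type) (mul : M -> M -> M) (one : M).
Variables (mu : seq A -> M) (lam : M -> A -> M -> nat).
Hypotheses (mulA : associative mul) (mulm1 : right_id one mul).
Hypotheses (mu0 : mu [::] = one) (muD : forall u v, mu (u ++ v) = mul (mu u) (mu v)).

(* Contribution of a factor [w] whose surrounding prefix and suffix evaluate to [l] and [r]. *)
Fixpoint bm_ctx (l : M) (w : seq A) (r : M) : nat :=
  if w is a :: w' then lam l a (mul (mu w') r) + bm_ctx (mul l (mu [:: a])) w' r else 0.

Lemma bm_auxE u w : bm_aux mu lam u w = bm_ctx (mu u) w one.
Proof. by elim: w u => [|a w IHw] u //=; rewrite mulm1 IHw -cats1 muD. Qed.

Lemma bimachine_funE w : bimachine_fun mu lam w = bm_ctx one w one.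
Proof. by rewrite /bimachine_fun bm_auxE mu0. Qed.

Lemma bm_ctx_cat l u v r :
  bm_ctx l (u ++ v) r = bm_ctx l u (mul (mu v) r) + bm_ctx (mul l (mu u)) v r.
Proof.
elim: u l => [|a u IHu] l /=; first by rewrite mu0 mulm1.
by rewrite IHu addnA (muD [:: a] u) !mulA -muD.
Qed.

Lemma mu_wpow u n : mu (wpow u n) = mpow mul one (mu u) n.
Proof. by elim: n => [|n IHn] //=; rewrite /wpow /= muD -/(wpow u n) IHn. Qed.

Section IdempotentPower.
Variables (u : seq A) (om : nat).
Let e := mu (wpow u om).
Hypothesis e_idem : mul e e = e.

Lemma mul_idem_mu_wpow n : mul e (mu (wpow u (om * n))) = e.
Proof.
elim: n => [|n IHn]; first by rewrite muln0 mu0 mulm1.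
by rewrite mulnS wpowD muD mulA e_idem IHn.
Qed.

Lemma mu_wpow_idem_mul n : mul (mu (wpow u (om * n))) e = e.
Proof. by rewrite -muD -wpowD -mulnSr mulnS wpowD muD mul_idem_mu_wpow. Qed.

Lemma mu_wpow_mul n : 0 < n -> mu (wpow u (om * n)) = e.
Proof. by case: n => // n _; rewrite mulnS wpowD muD mul_idem_mu_wpow. Qed.

Lemma mu_wpow_absorb n : om <= n -> mu (wpow u (n + om)) = mu (wpow u n).
Proof. by move=> /subnK <-; rewrite -addnA !wpowD !muD -/e e_idem. Qed.

Lemma bm_ctx_wpow_stable l r n :
  mul l e = l -> mul e r = r -> bm_ctx l (wpow u (om * n)) r = n * bm_ctx l (wpow u om) r.
Proof.
move=> le_l er_r; elim: n => [|n IHn]; first by rewrite muln0.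
rewrite mulnS wpowD bm_ctx_cat -/e le_l IHn mulSn; congr (_ + _).
by rewrite -{1}er_r mulA mu_wpow_idem_mul er_r.
Qed.

(* Each of the [n] inner factors [u^om] of [u^(om (n+2))] sees the contexts [l e] and [e r]. *)
Lemma bm_ctx_wpow_affine l r : affine_from2 (fun n => bm_ctx l (wpow u (om * n)) r).
Proof.
exists (bm_ctx l (wpow u om) (mul e r) + bm_ctx (mul l e) (wpow u om) r).
exists (bm_ctx (mul l e) (wpow u om) (mul e r)) => n.
have -> : om * n.+2 = om + (om * n + om) by rewrite !mulnS; lia.
rewrite !wpowD !bm_ctx_cat muD -/e mu_wpow_idem_mul -mulA mul_idem_mu_wpow.
rewrite bm_ctx_wpow_stable; [lia | by rewrite -mulA e_idem | by rewrite mulA e_idem].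
Qed.

Lemma bm_ctx_wpow_cat_affine v l r :
  affine_from2 (fun n => bm_ctx l (wpow u (om * n) ++ v) r).
Proof.
have [c [d affE]] := bm_ctx_wpow_affine l (mul (mu v) r).
exists (c + bm_ctx (mul l e) v r), d => n.
by rewrite bm_ctx_cat affE mu_wpow_mul //; lia.
Qed.

End IdempotentPower.

Section Blocks.
Variables (I : Type) (om : nat) (u v : I -> seq A).
Hypothesis idem_u : forall i, mul (mu (wpow (u i) om)) (mu (wpow (u i) om)) = mu (wpow (u i) om).

Definition blocks (s : seq I) (Z : I -> nat) : seq A :=
  flatten [seq wpow (u i) (om * Z i) ++ v i | i <- s].

Lemma mu_blocks s Z : (forall i, 0 < Z i) -> mu (blocks s Z) = mu (blocks s (fun _ => 1)).
Proof.
move=> Z_gt0; elim: s => [|i s IHs] //.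
by rewrite /blocks /= !muD -!/(blocks s _) IHs !mu_wpow_mul.
Qed.

Lemma sum_dependent_blocks s l r : sum_dependent (fun Z => bm_ctx l (blocks s Z) r).
Proof.
elim: s l => [|i s IHs] l; first exact: sum_dependent_cst.
pose l' := mul l (mu (wpow (u i) om ++ v i)).
pose r' := mul (mu (blocks s (fun _ => 1))) r.
apply: (sum_dependent_ext (h := fun Z =>
  bm_ctx l (wpow (u i) (om * Z i) ++ v i) r' + bm_ctx l' (blocks s Z) r)).
  move=> Z Z_ge2; have Z_gt0 j : 0 < Z j by apply: leq_trans (Z_ge2 j).
  by rewrite /blocks /= bm_ctx_cat -!/(blocks s _) mu_blocks // muD mu_wpow_mul // -muD.
apply: sum_dependentD (IHs _).
exact: sum_dependent_affine (bm_ctx_wpow_cat_affine (idem_u i) _ _ _).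
Qed.

End Blocks.

(* [p] absorbs [w q] and [t] absorbs [q w], so both slots see the contexts [l p] and [t r]. *)
Lemma bm_ctx_two_slots l r p q t w :
  mu (p ++ w ++ q) = mu p -> mu (q ++ w ++ t) = mu t ->
  exists K, forall x y, mu x = mu w -> mu y = mu w ->
    bm_ctx l (p ++ x ++ q ++ y ++ t) r =
    K + bm_ctx (mul l (mu p)) x (mul (mu t) r) + bm_ctx (mul l (mu p)) y (mul (mu t) r).
Proof.
move=> mu_pwq mu_qwt; pose L := mul (mul l (mu p)) (mu w).
exists (bm_ctx l p (mul (mu (w ++ t)) r) + bm_ctx L q (mul (mu (w ++ t)) r) + bm_ctx L t r).
move=> x y mu_x mu_y.
have ctx_y : mul (mul (mul l (mu p)) (mu x)) (mu q) = mul l (mu p).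
  by rewrite mu_x -!mulA -!muD mu_pwq.
have ctx_x : mu (q ++ y ++ t) = mu t by rewrite !muD mu_y -!muD.
rewrite !bm_ctx_cat ctx_y (muD x) ctx_x (muD y) mu_x mu_y -!muD -/L.
lia.
Qed.

Section Wword.
Variables (k om : nat) (alpha : 'I_k.+1 -> seq A) (u : 'I_k -> seq A).
Hypothesis idem_u : forall i, mul (mu (wpow (u i) om)) (mu (wpow (u i) om)) = mu (wpow (u i) om).

Lemma WwordE Z :
  Wword om alpha u Z = alpha ord0 ++ blocks om u (alpha \o lift ord0) (enum 'I_k) Z.
Proof. by []. Qed.

Lemma mu_Wword Z :
  (forall i, 0 < Z i) -> mu (Wword om alpha u Z) = mu (Wword om alpha u (fun _ => 1)).
Proof. by move=> Z_gt0; rewrite !WwordE !muD mu_blocks. Qed.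

Lemma sum_dependent_Wword l r : sum_dependent (fun Z => bm_ctx l (Wword om alpha u Z) r).
Proof.
pose F Z := blocks om u (alpha \o lift ord0) (enum 'I_k) Z.
apply: (sum_dependent_ext (h := fun Z =>
  bm_ctx l (alpha ord0) (mul (mu (F (fun _ => 1))) r) + bm_ctx (mul l (mu (alpha ord0))) (F Z) r)).
  move=> Z Z_ge2; have Z_gt0 i : 0 < Z i by apply: leq_trans (Z_ge2 i).
  by rewrite WwordE bm_ctx_cat mu_blocks.
by apply: sum_dependentD; [exact: sum_dependent_cst | exact: sum_dependent_blocks].
Qed.

End Wword.
End Bimachine.

Theorem mainTheorem2 (A : finType) (f : seq A -> nat) :
  regular f -> forall k : nat, 1 <= k -> repetitive k f.
Proof.
move=> [M [mul [one [mu [lam [[mulA [mul1m mulm1]] [[mu0 muD] f_eq]]]]]]] k _.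
exists #|M|`!; split; first exact: fact_gt0.
move=> a b alpha u om om_gt0 fact_dvd_om w.
have idem v : mul (mu (wpow v om)) (mu (wpow v om)) = mu (wpow v om).
  by rewrite (mu_wpow mu0 muD) mpow_fact_idem.
have wpowS n : wpow w n.+1 = w ++ wpow w n by [].
have om_eq : om = (om - 1).+1 by lia.
have absorb_p :
    mu ((a ++ wpow w (2 * om - 1)) ++ w ++ wpow w (om - 1)) = mu (a ++ wpow w (2 * om - 1)).
  by rewrite -catA -wpowS -om_eq -wpowD !muD (mu_wpow_absorb muD (idem w)) //; lia.
have absorb_t : mu (wpow w (om - 1) ++ w ++ wpow w om ++ b) = mu (wpow w om ++ b).
  rewrite (catA w) -wpowS catA -wpowD (_ : om - 1 + om.+1 = om + om); last by lia.
  by rewrite !muD (mu_wpow_absorb muD (idem w)).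
have [K HK] := bm_ctx_two_slots lam mulA mulm1 mu0 muD one one absorb_p absorb_t.
pose g Z := bm_ctx mul mu lam (mul one (mu (a ++ wpow w (2 * om - 1)))) (Wword om alpha u Z)
              (mul (mu (wpow w om ++ b)) one).
exists (fun S => K + g (fun _ => 3) + g (fun i => S i - 3)) => X Y X_ge3 Y_ge3.
have mu_W Z : (forall i, 3 <= Z i) -> mu (Wword om alpha u Z) = mu w.
  by move=> Z_ge3; rewrite (mu_Wword mulA mulm1 mu0 muD) // => i; apply: leq_trans (Z_ge3 i).
rewrite f_eq (bimachine_funE lam mulm1 mu0 muD) (catA a) HK ?mu_W // -!addnA; congr (_ + _).
apply: (sum_dependent_Wword lam mulA mulm1 mu0 muD) => // i; rewrite ffunE.
- by have := X_ge3 i; have := Y_ge3 i; split; lia.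
- by have := X_ge3 i; have := Y_ge3 i; lia.
Qed.
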